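(* A canonical term $t$ of $\Phi$ is in normal form (in $\Phi$) if and only if $\langle\!\langle t\rangle\!\rangle$ is in $\rightarrow_v$-normal form.
   Context: $\lambda$-terms: $M::=x\mid\lambda x.M\mid MN$, variables from a set $\Upsilon$ with a fixed total order, $FV(M)$ the ordered sequence of free variables. Values $V::=x\mid\lambda x.M$; weak call-by-value reduction $\rightarrow_v$: $(\lambda x.M)V\rightarrow_v M\{V/x\}$ for values $V$, closed under $ML$ and $LM$ contexts (no reduction under $\lambda$). $\Phi$ is the constructor rewrite system with binary function symbol $\mathbf{app}$ and constructors $c_{x,M}$ ($M$ a $\lambda$-term, $x\in\Upsilon$) of arity the length of $FV(\lambda x.M)$; $[\![x]\!]=x$, $[\![\lambda x.M]\!]=c_{x,M}(x_1,\dots,x_n)$ with $FV(\lambda x.M)=x_1,\dots,x_n$, $[\![MN]\!]=\mathbf{app}([\![M]\!],[\![N]\!])$; rules $\mathbf{app}(c_{x,M}(x_1,\dots,x_n),x)\rightarrow[\![M]\!]$; rewriting is call-by-value (variables of a rule are instantiated with constructor terms, i.e. closed terms built only from constructors; steps may occur anywhere). A term is in normal form if no step applies. $\langle\!\langle x\rangle\!\rangle=x$, $\langle\!\langle\mathbf{app}(u,v)\rangle\!\rangle=\langle\!\langle u\rangle\!\rangle\langle\!\langle v\rangle\!\rangle$, $\langle\!\langle c_{x,M}(t_1,\dots,t_n)\rangle\!\rangle=(\lambda x.M)\{\langle\!\langle t_1\rangle\!\rangle/x_1,\dots,\langle\!\langle t_n\rangle\!\rangle/x_n\}$ with $FV(\lambda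 x.M)=x_1,\dots,x_n$. A closed term $t$ is canonical if it is a constructor term or $t=\mathbf{app}(u,v)$ with $u,v$ canonical. *)

From Stdlib Require Import List.
From mathcomp Require Import all_boot.
Set Implicit Arguments. Unset Strict Implicit. Unset Printing Implicit Defensive.

(** Variables: the set Upsilon is nat, with its usual total order [leq]. *)

Inductive lterm : Type :=
| Var : nat -> lterm
| Lam : nat -> lterm -> lterm
| App : lterm -> lterm -> lterm.

Fixpoint fv (M : lterm) : seq nat :=
  match M with
  | Var x => [:: x]
  | Lam x N => filter (fun y => y != x) (fv N)
  | App N L => fv N ++ fv L
  end.

Definition FV (M : lterm) : seq nat := sort leq (undup (fv M)).

Fixpoint vars (M : lterm) : seq nat :=
  match M with
  | Var x => [:: x]
  | Lam x N => x :: vars N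
  | App N L => vars N ++ vars L
  end.

(** capture-avoiding simultaneous substitution M{N1/y1,...,Nk/yk},
    with sigma = [:: (y1,N1); ...; (yk,Nk)] (first binding of a variable wins). *)
Fixpoint ssubst (sigma : seq (nat * lterm)) (M : lterm) : lterm :=
  match M with
  | Var y => match [seq p <- sigma | p.1 == y] with
             | p :: _ => p.2
             | [::] => Var y
             end
  | App N L => App (ssubst sigma N) (ssubst sigma L)
  | Lam y N =>
      let sigma' := [seq p <- sigma | p.1 != y] in
      if has (fun p => y \in fv p.2) sigma' then
        let z := (\max_(v <- y :: vars N ++ [seq p.1 | p <- sigma']
                            ++ flatten [seq vars p.2 | p <- sigma']) v).+1 in
        Lam z (ssubst ((y, Var z) :: sigma') N)
      else Lam y (ssubst sigma' N)
  end.

Definition subst1 (V : lterm) (x : nat) (M : lterm) : lterm := ssubst [:: (x, V)] M.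

Definition is_value (M : lterm) : Prop :=
  match M with Var _ | Lam _ _ => True | App _ _ => False end.

Inductive vstep : lterm -> lterm -> Prop :=
| vs_beta x M V : is_value V -> vstep (App (Lam x M) V) (subst1 V x M)
| vs_appl M M' L : vstep M M' -> vstep (App M L) (App M' L)
| vs_appr L M M' : vstep M M' -> vstep (App L M) (App L M').

Definition v_normal (M : lterm) : Prop := ~ exists N, vstep M N.

(** Terms of Phi: variables, app(u,v), and c_{x,M}(t1,...,tn). *)
Inductive pterm : Type :=
| PVar : nat -> pterm
| PApp : pterm -> pterm -> pterm
| PCon : nat -> lterm -> seq pterm -> pterm.

Inductive is_cons : pterm -> Prop :=
| IC x M ts : size ts = size (FV (Lam x M)) -> Forall is_cons ts ->
              is_cons (PCon x M ts).

Inductive canonical : pterm -> Prop :=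
| can_cons t : is_cons t -> canonical t
| can_app u v : canonical u -> canonical v -> canonical (PApp u v).

Fixpoint enc (M : lterm) : pterm :=
  match M with
  | Var x => PVar x
  | Lam x N => PCon x N [seq PVar y | y <- FV (Lam x N)]
  | App N L => PApp (enc N) (enc L)
  end.

Fixpoint psubst (sigma : seq (nat * pterm)) (t : pterm) : pterm :=
  match t with
  | PVar y => match [seq p <- sigma | p.1 == y] with
              | p :: _ => p.2
              | [::] => PVar y
              end
  | PApp u v => PApp (psubst sigma u) (psubst sigma v)
  | PCon x M ts => PCon x M (map (psubst sigma) ts)
  end.

(** call-by-value rewriting in Phi: rule app(c_{x,M}(x1..xn), x) -> [[M]]
    with x1..xn, x instantiated by constructor terms; steps anywhere. *)
Inductive phi_step : pterm -> pterm -> Prop :=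
| ps_rule x M ss s :
    size ss = size (FV (Lam x M)) -> Forall is_cons ss -> is_cons s ->
    phi_step (PApp (PCon x M ss) s)
             (psubst (zip (FV (Lam x M)) ss ++ [:: (x, s)]) (enc M))
| ps_appl u u' v : phi_step u u' -> phi_step (PApp u v) (PApp u' v)
| ps_appr u v v' : phi_step v v' -> phi_step (PApp u v) (PApp u v')
| ps_con x M l1 t t' l2 : phi_step t t' ->
    phi_step (PCon x M (l1 ++ t :: l2)) (PCon x M (l1 ++ t' :: l2)).

Definition phi_normal (t : pterm) : Prop := ~ exists t', phi_step t t'.

Fixpoint dec (t : pterm) : lterm :=
  match t with
  | PVar x => Var x
  | PApp u v => App (dec u) (dec v)
  | PCon x M ts => ssubst (zip (FV (Lam x M)) (map dec ts)) (Lam x M)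
  end.

From Stdlib Require Import List.
From mathcomp Require Import all_boot.

(* Both sides are compositional on applications: [app(u,v)] is stuck exactly
   when [u] and [v] are stuck and the root rule does not fire, and the root rule
   fires on [app(u,v)] iff [u] and [v] are constructor terms, iff their decodings
   are a lambda and a value, iff beta fires at the root of the decoding.
   Constructor terms are Phi-normal and decode to abstractions, which are
   v-normal, so induction on canonical terms concludes. *)

Lemma phi_step_not_cons t t' : phi_step t t' -> ~ is_cons t.
Proof.
elim=> [x M ss s _ _ _|u u' v _ _|u v v' _ _|x M l1 s s' l2 _ IHs] Hcons;
  inversion Hcons as [x' M' ts _ Hts]; subst.
by move: Hts; rewrite Forall_app => -[_ Hts]; inversion Hts; exact: IHs.
Qed.

Lemma is_cons_phi_normal t : is_cons t -> phi_normal t.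
Proof. by move=> Hcons [t' Hstep]; exact: phi_step_not_cons _ _ Hstep Hcons. Qed.

Lemma dec_cons_lam t : is_cons t -> exists x L, dec t = Lam x L.
Proof. by case=> x M ts _ _ /=; case: ifP => _; do 2 eexists. Qed.

Lemma canonical_dec_lam t :
  canonical t -> (exists x L, dec t = Lam x L) <-> is_cons t.
Proof.
case=> [u Hu | u v _ _]; first by split=> // _; exact: dec_cons_lam.
by split=> [[? [? ?]] | Hcons] //; inversion Hcons.
Qed.

Lemma canonical_dec_value t : canonical t -> is_value (dec t) <-> is_cons t.
Proof.
case=> [u Hu | u v _ _]; last by split=> // Hcons; inversion Hcons.
by have [x [L ->]] := dec_cons_lam _ Hu.
Qed.

Lemma v_normal_lam x L : v_normal (Lam x L).
Proof. by move=> [N Hstep]; inversion Hstep. Qed.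

Lemma phi_normal_app u v :
  phi_normal (PApp u v) <->
  [/\ phi_normal u, phi_normal v & ~ (is_cons u /\ is_cons v)].
Proof.
split=> [Hn | [Hu Hv Hroot] [t' Hstep]].
- split=> [[u' Hu'] | [v' Hv'] | [Hcu Hcv]]; apply: Hn.
  + by exists (PApp u' v); exact: ps_appl.
  + by exists (PApp u v'); exact: ps_appr.
  + by case: Hcu Hcv => x M ss Hsz Hss Hcv; eexists; exact: ps_rule.
- inversion Hstep as [x M ss s Hsz Hss Hs| ? u' ? Hu'| ? ? v' Hv'|]; subst.
  + by apply: Hroot; split=> //; exact: IC.
  + by apply: Hu; exists u'.
  + by apply: Hv; exists v'.
Qed.

Lemma v_normal_app M N :
  v_normal (App M N) <->
  [/\ v_normal M, v_normal N & ~ ((exists x L, M = Lam x L) /\ is_value N)].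
Proof.
split=> [Hn | [HM HN Hroot] [P Hstep]].
- split=> [[M' HM'] | [N' HN'] | [[x [L EM]] HV]]; apply: Hn.
  + by exists (App M' N); exact: vs_appl.
  + by exists (App M N'); exact: vs_appr.
  + by rewrite EM; eexists; exact: vs_beta.
- inversion Hstep as [x L V HV| ? M' ? HM'| ? ? N' HN']; subst.
  + by apply: Hroot; split=> //; exists x, L.
  + by apply: HM; exists M'.
  + by apply: HN; exists N'.
Qed.

Theorem lemma3 (t : pterm) :
  canonical t -> (phi_normal t <-> v_normal (dec t)).
Proof.
elim=> [u Hu | u v Hu IHu Hv IHv].
  have [x [L ->]] := dec_cons_lam _ Hu.
  by split=> _; [exact: v_normal_lam | exact: is_cons_phi_normal].
rewrite /= phi_normal_app v_normal_app.
have Hlam := canonical_dec_lam _ Hu; have Hval := canonical_dec_value _ Hv.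
split=> -[Nu Nv Hroot]; split.
- exact/IHu.
- exact/IHv.
- by rewrite Hlam Hval.
- exact/IHu.
- exact/IHv.
- by rewrite -Hlam -Hval.
Qed.
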